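(* There is a universal constant $c>0$ such that for every integer $k\ge 3$ and every $\varepsilon\in(0,1/10)$, \[ d(k,\varepsilon)\ \le\ \frac{\log(\lceil 1/\varepsilon\rceil+1)}{\log(\lceil 1/\varepsilon\rceil+1)-\log(1-1/k)}\ \le\ 1-\frac{c}{k\,|\log\varepsilon|}. \] Moreover, the first inequality holds with $d(k,\varepsilon)$ replaced by the Assouad dimension $\dim_A(E)$ of any bounded set $E\subset\mathbb{R}$ that $\varepsilon$-avoids $k$APs.
   Context: A $k$-term arithmetic progression ($k$AP) is a set $P=\{x, x+\lambda, \dots, x+(k-1)\lambda\}\subset\mathbb{R}$ with $\lambda>0$, called the gap length of $P$. Given $\varepsilon\in(0,1)$, a set $E\subset\mathbb{R}$ is said to $\varepsilon$-avoid $k$APs if for every $k$AP $P$ with gap length $\lambda$ one has $\sup_{p\in P}\inf_{x\in E}|x-p|\ \ge\ \varepsilon\lambda$. Define $d(k,\varepsilon)=\sup\{\dim_H(E): E\subset\mathbb{R} \text{ bounded and } E \ \varepsilon\text{-avoids } k\text{APs}\}$, where $\dim_H$ is Hausdorff dimension. For bounded $F$ and $r>0$ let $N_r(F)$ be the least number of open balls of radius at most $r$ covering $F$; the Assouad dimension of $E\subseteq\mathbb{R}$ is $\dim_A(E)=\inf\{\alpha\ge 0: \exists C>0 \text{ such that for all } 0<r<R,\ \sup_{x\in E}N_r(B(x,R)\cap E)\le C(R/r)^\alpha\}$. *)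

From Stdlib Require Import Reals Lra.
Open Scope R_scope.

(* Ceiling of a real number: the least integer >= x. *)
Definition Rceil (x : R) : R := IZR (1 - up (- x))%Z.

Definition bounded_set (E : R -> Prop) : Prop :=
  exists M : R, forall x, E x -> Rabs x <= M.

(* E eps-avoids kAPs: for every kAP P = {x + i*lam : i < k} with gap lam > 0,
   sup_{p in P} inf_{y in E} |y - p| >= eps * lam.  Since P is finite the sup is
   attained, and inf_{y in E} |y - p| >= eps*lam means every y in E is at
   distance >= eps*lam from p (vacuous if E is empty, inf = +infinity). *)
Definition eps_avoids_kAP (k : nat) (eps : R) (E : R -> Prop) : Prop :=
  forall x lam : R, 0 < lam ->
    exists i : nat, (i < k)%nat /\
      forall y, E y -> eps * lam <= Rabs (y - (x + INR i * lam)).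

Definition is_glb (S : R -> Prop) (m : R) : Prop :=
  (forall s, S s -> m <= s) /\
  (forall m', (forall s, S s -> m' <= s) -> m' <= m).

(* s-dimensional Hausdorff measure of E is zero: H^s(E) = lim_{delta->0} H^s_delta(E) = 0,
   i.e. for all delta > 0, H^s_delta(E) = inf { sum diam(U_n)^s : E ⊆ ∪ U_n,
   diam U_n <= delta } = 0.  The numbers r n are upper bounds (> 0) for diam (U n);
   taking the infimum this does not change the value. *)
Definition hausdorff_null (s : R) (E : R -> Prop) : Prop :=
  forall delta eta : R, 0 < delta -> 0 < eta ->
    exists (U : nat -> R -> Prop) (r : nat -> R),
      (forall n, 0 < r n <= delta) /\
      (forall n y z, U n y -> U n z -> Rabs (y - z) <= r n) /\
      (forall y, E y -> exists n, U n y) /\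
      (forall N, sum_f_R0 (fun n => Rpower (r n) s) N <= eta).

Definition hausdorff_dim (E : R -> Prop) (d : R) : Prop :=
  is_glb (fun s => 0 <= s /\ hausdorff_null s E) d.

Definition d_ke (k : nat) (eps : R) (d : R) : Prop :=
  is_lub (fun t => exists E, bounded_set E /\ eps_avoids_kAP k eps E /\
                              hausdorff_dim E t) d.

Definition covered_by_balls (F : R -> Prop) (r : R) (n : nat) : Prop :=
  exists (c rad : nat -> R),
    (forall i, (i < n)%nat -> 0 < rad i <= r) /\
    (forall y, F y -> exists i, (i < n)%nat /\ Rabs (y - c i) < rad i).

(* sup_{x in E} N_r(B(x,R) ∩ E) <= C (R/r)^alpha, where N_r is the least number of
   balls, so N_r(F) <= bound iff some cover uses a number n <= bound of balls. *)
Definition assouad_ok (E : R -> Prop) (alpha : R) : Prop :=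
  exists C : R, 0 < C /\
    forall r Rr : R, 0 < r -> r < Rr ->
      forall x, E x ->
        exists n : nat,
          covered_by_balls (fun y => Rabs (y - x) < Rr /\ E y) r n /\
          INR n <= C * Rpower (Rr / r) alpha.

Definition assouad_dim (E : R -> Prop) (a : R) : Prop :=
  is_glb (fun alpha => 0 <= alpha /\ assouad_ok E alpha) a.

Definition ap_bound (k : nat) (eps : R) : R :=
  ln (Rceil (/ eps) + 1) / (ln (Rceil (/ eps) + 1) - ln (1 - / INR k)).

From Stdlib Require Import Reals Lra Lia List ZArith.

(* Let [E] eps-avoid kAPs and [n >= 1/eps].  Cut an interval of length [L] into [k n]
   cells of width [d = L / (k n)].  For each residue [j < n], the kAP through the
   midpoints of the cells [j, j + n, ..., j + (k-1) n] has gap [n d], so one of its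
   terms is at distance [>= eps n d >= d] from [E] and its cell misses [E].  Removing
   these [n] cells leaves at most [n + 1] runs of total length [(1 - 1/k) L] covering
   the part of [E] in the interval.  Iterating down to scale [r] and using the concavity
   of [t ^ a], that part is covered by [C (L/r) ^ a] balls of radius [r] as soon as
   [(n+1) ((1 - 1/k) / (n+1)) ^ a < 1], i.e. as soon as [a] exceeds [ap_bound k eps]
   for [n = ceil (1/eps)]. *)

Fixpoint count_below (f : nat -> bool) (T : nat) : nat :=
  match T with
  | O => O
  | S T' => count_below f T' + Nat.b2n (f T')
  end.

Lemma count_below_ext (f g : nat -> bool) (T : nat) :
  (forall c, (c < T)%nat -> f c = g c) -> count_below f T = count_below g T.
Proof.
  induction T as [|T IH]; intros Hfg; [reflexivity|]; cbn [count_below].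
  rewrite Hfg by lia. rewrite IH by (intros; apply Hfg; lia). reflexivity.
Qed.

Lemma count_below_add (f g h : nat -> bool) (T : nat) :
  (forall c, (c < T)%nat -> Nat.b2n (h c) = Nat.b2n (f c) + Nat.b2n (g c))%nat ->
  count_below h T = (count_below f T + count_below g T)%nat.
Proof.
  induction T as [|T IH]; intros Hfgh; [reflexivity|]; cbn [count_below].
  rewrite Hfgh by lia. rewrite IH by (intros; apply Hfgh; lia). lia.
Qed.

Lemma count_below_const (b : bool) (T : nat) :
  count_below (fun _ => b) T = (Nat.b2n b * T)%nat.
Proof. induction T as [|T IH]; cbn [count_below]; [lia|]. rewrite IH. lia. Qed.

Section MarkedCells.
Variables (n : nat) (row : nat -> nat).
Hypothesis n_pos : n <> O.

Definition marked (c : nat) : bool := Nat.eqb (row (c mod n)) (c / n).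

Lemma count_marked_partial_row (q r : nat) : (r <= n)%nat ->
  count_below marked (q * n + r) =
  (count_below marked (q * n) + count_below (fun j => Nat.eqb (row j) q) r)%nat.
Proof.
  induction r as [|r IH]; intros Hr; [rewrite Nat.add_0_r; cbn [count_below]; lia|].
  replace (q * n + S r)%nat with (S (q * n + r)) by lia. cbn [count_below].
  rewrite IH by lia. unfold marked.
  replace ((q * n + r) mod n)%nat with r
    by (rewrite Nat.add_comm, Nat.Div0.mod_add, Nat.mod_small; lia).
  replace ((q * n + r) / n)%nat with q
    by (rewrite Nat.add_comm, Nat.div_add, Nat.div_small; lia).
  lia.
Qed.

Lemma count_marked_rows (q : nat) :
  count_below marked (q * n) = count_below (fun j => Nat.ltb (row j) q) n.
Proof.
  induction q as [|q IH].
  - rewrite (count_below_ext (fun j => row j <? 0) (fun _ => false)), count_below_const;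
      [reflexivity|].
    intros c _. destruct (row c); reflexivity.
  - replace (S q * n)%nat with (q * n + n)%nat by lia.
    rewrite count_marked_partial_row, IH by lia. symmetry. apply count_below_add.
    intros c _.
    destruct (Nat.ltb_spec (row c) (S q)), (Nat.ltb_spec (row c) q),
      (Nat.eqb_spec (row c) q); cbn; lia.
Qed.

Lemma count_marked (k : nat) : (forall j, (j < n)%nat -> (row j < k)%nat) ->
  count_below marked (k * n) = n.
Proof.
  intros Hrow. rewrite count_marked_rows, (count_below_ext _ (fun _ => true)).
  - rewrite count_below_const. cbn. lia.
  - intros c Hc. apply Nat.ltb_lt, Hrow, Hc.
Qed.
End MarkedCells.

Fixpoint total_length (l : list (nat * nat)) : nat :=
  match l with
  | nil => O
  | p :: l' => (snd p - fst p + total_length l')%nat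
  end.

(* The second clause is the invariant that makes the count work: when the
   number of runs is maximal, the newest run is still open at [T], so an
   unmarked cell [T] extends it rather than starting a new one. *)
Lemma unmarked_runs (mark : nat -> bool) (T : nat) : exists l : list (nat * nat),
  (length l <= 1 + count_below mark T)%nat /\
  (length l = S (count_below mark T) -> exists u l', l = (u, T) :: l') /\
  (total_length l + count_below mark T <= T)%nat /\
  (forall p, In p l -> (fst p <= snd p <= T)%nat) /\
  (forall c, (c < T)%nat -> mark c = false ->
     exists p, In p l /\ (fst p <= c < snd p)%nat).
Proof.
  induction T as [|T IH].
  - exists nil. cbn. repeat split; intros; try lia; contradiction.
  - destruct IH as (l & Hlen & Hopen & Htot & Hin & Hcov). cbn [count_below].
    destruct (mark T) eqn:HT; cbn [Nat.b2n].
    + exists l. split; [lia|]. split; [intros; lia|]. split; [lia|]. split.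
      * intros p Hp. specialize (Hin p Hp). lia.
      * intros c Hc Hmc. destruct (Nat.eq_dec c T) as [->|]; [congruence|].
        apply Hcov; [lia|exact Hmc].
    + destruct (Nat.eq_dec (length l) (S (count_below mark T))) as [Hfull|Hfull].
      * destruct (Hopen Hfull) as (u & l' & ->).
        assert (Hu := Hin (u, T) (or_introl eq_refl)).
        cbn [length total_length fst snd] in Hu, Hfull, Htot.
        exists ((u, S T) :: l'). cbn [length total_length fst snd]. split; [lia|]. split.
        { intros; exists u, l'; reflexivity. }
        split; [lia|]. split.
        -- intros p [<-|Hp]; cbn [fst snd]; [lia|]. specialize (Hin p (or_intror Hp)). lia.
        -- intros c Hc Hmc. destruct (Nat.eq_dec c T) as [->|].
           { exists (u, S T). cbn. split; [left; reflexivity|lia]. }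
           destruct (Hcov c ltac:(lia) Hmc) as (p & [<-|Hp] & Hcp).
           ++ exists (u, S T). cbn in *. split; [left; reflexivity|lia].
           ++ exists p. split; [right; exact Hp|exact Hcp].
      * exists ((T, S T) :: l). cbn [length total_length fst snd]. split; [lia|]. split.
        { intros; eexists; eexists; reflexivity. }
        split; [lia|]. split.
        -- intros p [<-|Hp]; cbn [fst snd]; [lia|]. specialize (Hin p Hp). lia.
        -- intros c Hc Hmc. destruct (Nat.eq_dec c T) as [->|].
           { exists (T, S T). cbn. split; [left; reflexivity|lia]. }
           destruct (Hcov c ltac:(lia) Hmc) as (p & Hp & Hcp).
           exists p. split; [right; exact Hp|exact Hcp].
Qed.

Open Scope R_scope.

Lemma Rpower_pos (x a : R) : 0 < Rpower x a.
Proof. apply exp_pos. Qed.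

Lemma Rpower_le_affine (t a : R) : 0 <= a <= 1 -> 0 < t -> Rpower t a <= a * t + (1 - a).
Proof.
  intros Ha Ht. unfold Rpower. set (c := a * ln t).
  (* both [exp (ln t)] and [exp 0] lie above the tangent to [exp] at [c] *)
  assert (Htangent : forall x, exp c * (1 + (x - c)) <= exp x).
  { intros x. replace (exp x) with (exp c * exp (x - c))
      by (rewrite <- exp_plus; f_equal; ring).
    apply Rmult_le_compat_l; [apply Rlt_le, exp_pos|apply exp_ineq1_le]. }
  pose proof (Htangent (ln t)) as H1. pose proof (Htangent 0) as H2.
  rewrite exp_ln in H1 by lra. rewrite exp_0 in H2.
  assert (a * (exp c * (1 + (ln t - c))) + (1 - a) * (exp c * (1 + (0 - c))) = exp c)
    by (unfold c; ring).
  nra.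
Qed.

(* [x ^ a] for [x > 0], extended by [0 ^ a = 0]; [Rpower 0 a] would be [exp 0 = 1],
   which breaks the concavity inequality at the origin. *)
Definition rpow0 (x a : R) : R := if Rlt_dec 0 x then Rpower x a else 0.

Lemma rpow0_nonneg (x a : R) : 0 <= rpow0 x a.
Proof. unfold rpow0. destruct Rlt_dec; [apply Rlt_le, Rpower_pos|lra]. Qed.

Lemma rpow0_le_tangent (x y a : R) : 0 <= a <= 1 -> 0 < y -> 0 <= x ->
  rpow0 x a <= Rpower y a + a * (Rpower y a / y) * (x - y).
Proof.
  intros Ha Hy Hx. pose proof (Rpower_pos y a). unfold rpow0.
  destruct Rlt_dec as [Hx0|Hx0].
  - replace x with (y * (x / y)) at 1 by (field; lra).
    rewrite <- Rpower_mult_distr by (try apply Rdiv_lt_0_compat; lra).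
    pose proof (Rpower_le_affine (x / y) a Ha ltac:(apply Rdiv_lt_0_compat; lra)).
    apply Rle_trans with (Rpower y a * (a * (x / y) + (1 - a))).
    + apply Rmult_le_compat_l; lra.
    + right. field. lra.
  - replace x with 0 by lra.
    replace (Rpower y a + a * (Rpower y a / y) * (0 - y)) with ((1 - a) * Rpower y a)
      by (field; lra).
    nra.
Qed.

Fixpoint sum_list (l : list R) : R :=
  match l with
  | nil => 0
  | x :: l' => x + sum_list l'
  end.

Lemma sum_list_nonneg (l : list R) : (forall x, In x l -> 0 <= x) -> 0 <= sum_list l.
Proof.
  induction l as [|x l IH]; cbn; intros Hl; [lra|].
  pose proof (Hl x (or_introl eq_refl)). pose proof (IH (fun z Hz => Hl z (or_intror Hz))).
  lra.
Qed.

Lemma In_le_sum_list (l : list R) (x : R) :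
  (forall z, In z l -> 0 <= z) -> In x l -> x <= sum_list l.
Proof.
  intros Hl Hx. induction l as [|z l IH]; [destruct Hx|]. cbn.
  assert (Hl' : forall w, In w l -> 0 <= w) by (intros; apply Hl; right; auto).
  destruct Hx as [<-|Hx].
  - pose proof (sum_list_nonneg l Hl'). lra.
  - pose proof (Hl z (or_introl eq_refl)). pose proof (IH Hl' Hx). lra.
Qed.

Lemma sum_list_map_le {A : Type} (l : list A) (f g : A -> R) :
  (forall p, In p l -> f p <= g p) -> sum_list (map f l) <= sum_list (map g l).
Proof.
  induction l as [|p l IH]; cbn; intros Hfg; [lra|].
  pose proof (Hfg p (or_introl eq_refl)). pose proof (IH (fun z Hz => Hfg z (or_intror Hz))).
  lra.
Qed.

Lemma sum_list_map_affine {A : Type} (l : list A) (f : A -> R) (b c : R) :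
  sum_list (map (fun p => b + c * f p) l) = INR (length l) * b + c * sum_list (map f l).
Proof.
  induction l as [|p l IH]; cbn [map sum_list length]; [cbn [INR]; ring|].
  rewrite IH, S_INR. ring.
Qed.

Lemma sum_rpow0_le_tangent (l : list R) (y a : R) : 0 <= a <= 1 -> 0 < y ->
  (forall x, In x l -> 0 <= x) ->
  sum_list (map (fun x => rpow0 x a) l) <=
  INR (length l) * Rpower y a + a * (Rpower y a / y) * (sum_list l - INR (length l) * y).
Proof.
  intros Ha Hy. induction l as [|x l IH]; intros Hl; [cbn; lra|].
  pose proof (rpow0_le_tangent x y a Ha Hy (Hl x (or_introl eq_refl))).
  pose proof (IH (fun z Hz => Hl z (or_intror Hz))).
  cbn [length map sum_list]. rewrite S_INR. nra.
Qed.

Lemma sum_rpow0_le (l : list R) (a m S : R) : 0 <= a <= 1 -> 0 < S -> 0 < m ->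
  (forall x, In x l -> 0 <= x) -> INR (length l) <= m -> sum_list l <= S ->
  sum_list (map (fun x => rpow0 x a) l) <= m * Rpower (S / m) a.
Proof.
  intros Ha HS Hm Hl Hlen Hsum. set (y := S / m).
  assert (Hy : 0 < y) by (apply Rdiv_lt_0_compat; lra).
  pose proof (sum_rpow0_le_tangent l y a Ha Hy Hl).
  pose proof (Rpower_pos y a).
  assert (Hslope : 0 <= a * (Rpower y a / y))
    by (apply Rmult_le_pos; [lra|apply Rlt_le, Rdiv_lt_0_compat; lra]).
  assert (a * (Rpower y a / y) * S = a * m * Rpower y a) by (unfold y; field; lra).
  pose proof (pos_INR (length l)).
  assert (a * (Rpower y a / y) * sum_list l <= a * (Rpower y a / y) * S)
    by (apply Rmult_le_compat_l; lra).
  assert ((1 - a) * INR (length l) * Rpower y a <= (1 - a) * m * Rpower y a)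
    by (apply Rmult_le_compat_r; [lra|apply Rmult_le_compat_l; lra]).
  assert (INR (length l) * Rpower y a
            + a * (Rpower y a / y) * (sum_list l - INR (length l) * y)
          = (1 - a) * INR (length l) * Rpower y a + a * (Rpower y a / y) * sum_list l)
    by (field; lra).
  nra.
Qed.

Lemma finite_choice (P : nat -> nat -> Prop) (n : nat) :
  (forall j, (j < n)%nat -> exists i, P j i) ->
  exists f, forall j, (j < n)%nat -> P j (f j).
Proof.
  induction n as [|n IH]; intros HP.
  - exists (fun _ => O). intros; lia.
  - destruct IH as [f Hf]; [intros; apply HP; lia|].
    destruct (HP n ltac:(lia)) as [i Hi].
    exists (fun j => if Nat.eq_dec j n then i else f j).
    intros j Hj. destruct (Nat.eq_dec j n) as [->|]; [exact Hi|apply Hf; lia].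
Qed.

Lemma locate_cell (u d y : R) (T : nat) : 0 < d -> (1 <= T)%nat ->
  u <= y <= u + INR T * d ->
  exists c, (c < T)%nat /\ u + INR c * d <= y <= u + INR (S c) * d.
Proof.
  intros Hd. induction T as [|T IH]; intros HT Hy; [lia|].
  destruct (Rle_dec y (u + INR T * d)) as [Hle|Hgt].
  - destruct (Nat.eq_dec T 0) as [->|HT0].
    + exists O. cbn [INR] in *. split; [lia|lra].
    + destruct IH as (c & Hc & Hyc); [lia|lra|]. exists c. split; [lia|lra].
  - exists T. split; [lia|lra].
Qed.

Lemma covered_by_balls_mono (F G : R -> Prop) (r : R) (m : nat) :
  (forall y, F y -> G y) -> covered_by_balls G r m -> covered_by_balls F r m.
Proof. intros HFG (c & rad & Hrad & Hcov). exists c, rad. split; auto. Qed.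

Lemma covered_by_balls_empty (r : R) : covered_by_balls (fun _ => False) r 0.
Proof. exists (fun _ => 0), (fun _ => 0). split; intros; [lia|contradiction]. Qed.

Lemma covered_by_balls_union (F G : R -> Prop) (r : R) (m1 m2 : nat) :
  covered_by_balls F r m1 -> covered_by_balls G r m2 ->
  covered_by_balls (fun y => F y \/ G y) r (m1 + m2).
Proof.
  intros (c1 & r1 & Hr1 & Hcov1) (c2 & r2 & Hr2 & Hcov2).
  exists (fun i => if Nat.ltb i m1 then c1 i else c2 (i - m1)%nat),
         (fun i => if Nat.ltb i m1 then r1 i else r2 (i - m1)%nat).
  split.
  - intros i Hi. destruct (Nat.ltb_spec i m1); [apply Hr1; auto|apply Hr2; lia].
  - intros y [Hy|Hy].
    + destruct (Hcov1 y Hy) as (i & Hi & Hyi). exists i. split; [lia|].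
      destruct (Nat.ltb_spec i m1); [exact Hyi|lia].
    + destruct (Hcov2 y Hy) as (i & Hi & Hyi). exists (m1 + i)%nat. split; [lia|].
      destruct (Nat.ltb_spec (m1 + i) m1); [lia|].
      replace (m1 + i - m1)%nat with i by lia. exact Hyi.
Qed.

Lemma covered_by_balls_interval (u v r : R) : 0 < r -> v - u <= r ->
  covered_by_balls (fun y => u <= y <= v) r 1.
Proof.
  intros Hr Huv. exists (fun _ => (u + v) / 2), (fun _ => r). split.
  - intros; lra.
  - intros y Hy. exists O. split; [lia|]. apply Rabs_def1; lra.
Qed.

Lemma covered_by_balls_short (E : R -> Prop) (u L r : R) : 0 < r -> 0 <= L <= r ->
  covered_by_balls (fun y => E y /\ u <= y <= u + L) r 1.
Proof.
  intros Hr HL.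
  eapply covered_by_balls_mono; [|apply (covered_by_balls_interval u (u + L) r Hr)].
  - intros y [_ Hy]; exact Hy.
  - lra.
Qed.

Lemma covered_by_balls_Union {A : Type} (F : A -> R -> Prop) (w : A -> R)
    (l : list A) (r : R) :
  (forall p, In p l -> exists m, covered_by_balls (F p) r m /\ INR m <= w p) ->
  exists m, covered_by_balls (fun y => exists p, In p l /\ F p y) r m /\
            INR m <= sum_list (map w l).
Proof.
  induction l as [|p l IH]; intros Hl.
  - exists O. split; [|cbn; lra].
    eapply covered_by_balls_mono; [|apply covered_by_balls_empty].
    intros y (p & [] & _).
  - destruct (Hl p (or_introl eq_refl)) as (m1 & Hcov1 & Hw1).
    destruct IH as (m2 & Hcov2 & Hw2); [intros; apply Hl; right; auto|].
    exists (m1 + m2)%nat. split.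
    + eapply covered_by_balls_mono; [|apply (covered_by_balls_union _ _ _ _ _ Hcov1 Hcov2)].
      intros y (p' & [<-|Hp'] & Hy); [left; exact Hy|right; eauto].
    + rewrite plus_INR. cbn. lra.
Qed.

Lemma sum_f_R0_indicator_le (m : nat) (c : R) (N : nat) : 0 <= c ->
  sum_f_R0 (fun i => if Nat.ltb i m then c else 0) N <= INR m * c.
Proof.
  intros Hc.
  assert (Hsum : sum_f_R0 (fun i => if Nat.ltb i m then c else 0) N = INR (Nat.min (S N) m) * c).
  { induction N as [|N IH]; cbn [sum_f_R0].
    - destruct (Nat.ltb_spec 0 m); [rewrite Nat.min_l by lia|rewrite Nat.min_r by lia];
        cbn [INR]; [ring|]. replace m with 0%nat by lia. cbn. ring.
    - rewrite IH. destruct (Nat.ltb_spec (S N) m).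
      + rewrite !Nat.min_l by lia. rewrite (S_INR (S N)). ring.
      + rewrite !Nat.min_r by lia. ring. }
  rewrite Hsum. apply Rmult_le_compat_r; [exact Hc|apply le_INR; lia].
Qed.

Lemma sum_f_R0_geometric_half (e : R) (N : nat) :
  sum_f_R0 (fun i => e * (/2) ^ (S i)) N = e - e * (/2) ^ (S N).
Proof. induction N as [|N IH]; [cbn; field|]. rewrite tech5, IH. cbn. field. Qed.

(* A Hausdorff cover is an infinite sequence of sets with positive diameter bounds:
   the [m] balls are padded with sets of diameter bound [tail i], whose [s]-powers
   form a geometric series of sum at most [eta / 2]. *)
Lemma hausdorff_null_of_ball_covers (s : R) (E : R -> Prop) : 0 < s ->
  (forall delta eta, 0 < delta -> 0 < eta ->
     exists r m, 0 < r /\ 2 * r <= delta /\ covered_by_balls E r m /\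
                 INR m * Rpower (2 * r) s <= eta) ->
  hausdorff_null s E.
Proof.
  intros Hs Hcovers delta eta Hdelta Heta.
  destruct (Hcovers delta (eta / 2) Hdelta ltac:(lra))
    as (r & m & Hr & Hrdelta & (c & rad & Hrad & Hcov) & Hm).
  set (e := Rmin (eta / 2) (Rpower delta s)).
  assert (He : 0 < e) by (apply Rmin_glb_lt; [lra|apply Rpower_pos]).
  set (tail := fun i : nat => Rpower (e * (/2) ^ (S i)) (/ s)).
  assert (Hhalf : forall i, 0 < (/2) ^ (S i) <= 1).
  { intros i. split; [apply pow_lt; lra|].
    apply Rlt_le, (pow_lt_1_compat (/2) (S i)); [lra|lia]. }
  assert (Htail : forall i, Rpower (tail i) s = e * (/2) ^ (S i)).
  { intros i. pose proof (Hhalf i). unfold tail.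
    rewrite Rpower_mult, Rinv_l by lra. apply Rpower_1, Rmult_lt_0_compat; lra. }
  exists (fun i y => (i < m)%nat /\ Rabs (y - c i) < rad i).
  exists (fun i => if Nat.ltb i m then 2 * r else tail i).
  split; [|split; [|split]].
  - intros i. destruct (Nat.ltb_spec i m); [lra|]. split; [apply Rpower_pos|].
    apply Rle_trans with (Rpower (Rpower delta s) (/ s)).
    + apply Rle_Rpower_l; [apply Rlt_le, Rinv_0_lt_compat; lra|].
      assert (e <= Rpower delta s) by apply Rmin_r.
      pose proof (Hhalf i). split; [apply Rmult_lt_0_compat; lra|]. nra.
    + rewrite Rpower_mult, Rinv_r, Rpower_1 by lra. lra.
  - intros i y z [Hi Hy] [_ Hz]. destruct (Nat.ltb_spec i m); [|lia].
    pose proof (Hrad i Hi).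
    replace (y - z) with ((y - c i) + - (z - c i)) by ring.
    pose proof (Rabs_triang (y - c i) (- (z - c i))). rewrite Rabs_Ropp in *. lra.
  - intros y Ey. destruct (Hcov y Ey) as (i & Hi & Hy). exists i. auto.
  - intros N.
    apply Rle_trans with (sum_f_R0 (fun i => (if Nat.ltb i m then Rpower (2 * r) s else 0)
                                             + e * (/2) ^ (S i)) N).
    + apply sum_Rle. intros i _. destruct (Nat.ltb_spec i m).
      * pose proof (Hhalf i). assert (0 < e * (/2) ^ (S i)) by (apply Rmult_lt_0_compat; lra).
        lra.
      * rewrite Htail. lra.
    + rewrite plus_sum, sum_f_R0_geometric_half.
      pose proof (sum_f_R0_indicator_le m (Rpower (2 * r) s) N
                    ltac:(apply Rlt_le, Rpower_pos)).
      assert (e <= eta / 2) by apply Rmin_l.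
      assert (0 < e * (/2) ^ (S N)) by (apply Rmult_lt_0_compat; [lra|apply Hhalf]).
      lra.
Qed.

Lemma marked_cell_misses (n : nat) (eps : R) (E : R -> Prop) (u d : R)
    (row : nat -> nat) (c : nat) (y : R) :
  (1 <= n)%nat -> 1 <= INR n * eps -> 0 < d ->
  (forall j, (j < n)%nat -> forall y, E y ->
     eps * (INR n * d) <= Rabs (y - ((u + (INR j + /2) * d) + INR (row j) * (INR n * d)))) ->
  marked n row c = true -> u + INR c * d <= y <= u + INR (S c) * d -> ~ E y.
Proof.
  intros Hn Hneps Hd Hrow Hc Hy Ey. unfold marked in Hc. apply Nat.eqb_eq in Hc.
  assert (Hj : (c mod n < n)%nat) by (apply Nat.mod_upper_bound; lia).
  specialize (Hrow (c mod n) Hj y Ey). rewrite Hc in Hrow.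
  assert (Hdiv : INR c = INR (c / n) * INR n + INR (c mod n)).
  { rewrite <- mult_INR, <- plus_INR. f_equal.
    rewrite Nat.mul_comm. apply Nat.div_mod. lia. }
  replace (u + (INR (c mod n) + / 2) * d + INR (c / n) * (INR n * d))
    with (u + (INR c + / 2) * d) in Hrow by (rewrite Hdiv; ring).
  rewrite S_INR in Hy.
  assert (Rabs (y - (u + (INR c + / 2) * d)) <= d / 2) by (apply Rabs_le; lra).
  assert (d <= eps * (INR n * d)) by nra.
  lra.
Qed.

Lemma avoid_interval_runs (k n : nat) (eps : R) (E : R -> Prop) (u L : R) :
  (1 <= k)%nat -> (1 <= n)%nat -> 1 <= INR n * eps -> eps_avoids_kAP k eps E -> 0 < L ->
  exists l : list (nat * nat),
    (length l <= S n)%nat /\ (total_length l <= (k - 1) * n)%nat /\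
    (forall p, In p l -> (fst p <= snd p)%nat) /\
    forall y, E y -> u <= y <= u + L ->
      exists p, In p l /\
        u + INR (fst p) * (L / INR (k * n)) <= y <= u + INR (snd p) * (L / INR (k * n)).
Proof.
  intros Hk Hn1 Hneps Havoid HL. set (d := L / INR (k * n)).
  assert (Hkn : 0 < INR (k * n)) by (apply lt_0_INR; nia).
  assert (Hd : 0 < d) by (apply Rdiv_lt_0_compat; lra).
  assert (HLd : L = INR (k * n) * d) by (unfold d; field; lra).
  assert (Hn : 0 < INR n) by (apply lt_0_INR; lia).
  destruct (finite_choice (fun j i => (i < k)%nat /\ forall y, E y ->
      eps * (INR n * d) <= Rabs (y - ((u + (INR j + /2) * d) + INR i * (INR n * d)))) n)
    as [row Hrow].
  { intros j _. apply Havoid. apply Rmult_lt_0_compat; lra. }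
  destruct (unmarked_runs (marked n row) (k * n)) as (l & Hlen & _ & Htot & Hin & Hcov).
  assert (Hcount : count_below (marked n row) (k * n) = n)
    by (apply count_marked; [lia|intros j Hj; apply (Hrow j Hj)]).
  rewrite Hcount in Hlen, Htot.
  exists l. split; [lia|]. split; [nia|]. split; [intros p Hp; apply Hin, Hp|].
  intros y Ey Hy.
  destruct (locate_cell u d y (k * n) Hd ltac:(nia) ltac:(lra)) as (c & Hc & Hyc).
  destruct (marked n row c) eqn:Hmark.
  - exfalso. refine (marked_cell_misses n eps E u d row c y Hn1 Hneps Hd _ Hmark Hyc Ey).
    intros j Hj. apply (Hrow j Hj).
  - destruct (Hcov c Hc Hmark) as (p & Hp & Hcp). exists p. split; [exact Hp|].
    fold d. rewrite S_INR in Hyc.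
    assert (INR (fst p) <= INR c) by (apply le_INR; lia).
    assert (INR c + 1 <= INR (snd p)) by (rewrite <- S_INR; apply le_INR; lia).
    nra.
Qed.

Lemma sum_list_run_lengths (l : list (nat * nat)) (d : R) :
  sum_list (map (fun p => INR (snd p - fst p) * d) l) = INR (total_length l) * d.
Proof.
  induction l as [|p l IH]; cbn [map sum_list total_length]; [cbn; ring|].
  rewrite IH, plus_INR. ring.
Qed.

Section Counting.
Variables (k n : nat) (eps : R) (E : R -> Prop) (a : R).
Hypotheses (k_ge2 : (2 <= k)%nat) (n_pos : (1 <= n)%nat)
  (n_eps : 1 <= INR n * eps) (avoid : eps_avoids_kAP k eps E) (a_unit : 0 <= a <= 1).

Let M := INR (S n).
Let q := 1 - / INR k.
Let theta := M * Rpower (q / M) a.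
Hypothesis theta_lt_1 : theta < 1.
Let A := M / (1 - theta).

Let cover_bound (r L : R) : R := if Rle_dec L r then 1 else A * Rpower (L / r) a.

Lemma q_bounds : 0 < q < 1.
Proof.
  assert (2 <= INR k) by (replace 2 with (INR 2) by (cbn; lra); apply le_INR; exact k_ge2).
  assert (0 < / INR k <= / 2) by (split; [apply Rinv_0_lt_compat|apply Rinv_le_contravar]; lra).
  unfold q. lra.
Qed.

Lemma M_ge1 : 1 <= M.
Proof. unfold M. rewrite S_INR. pose proof (pos_INR n). lra. Qed.

Lemma A_ge1 : 1 <= A.
Proof.
  pose proof M_ge1. pose proof (Rpower_pos (q / M) a).
  assert (0 < theta) by (apply Rmult_lt_0_compat; lra).
  unfold A. apply (Rmult_le_reg_r (1 - theta)); [lra|].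
  unfold Rdiv. rewrite Rmult_assoc, Rinv_l by lra. nra.
Qed.

(* The constant [A] is chosen so that [M + A theta = A]: the [<= M] pieces cost one
   ball each plus, by concavity, [A theta (L/r)^a] in total. *)
Lemma cover_bound_pieces (r L : R) (ls : list R) : 0 < r < L ->
  (forall x, In x ls -> 0 <= x) -> INR (length ls) <= M -> sum_list ls <= q * L ->
  sum_list (map (cover_bound r) ls) <= A * Rpower (L / r) a.
Proof.
  intros Hr Hls Hlen Hsum. pose proof q_bounds. pose proof M_ge1. pose proof A_ge1.
  assert (Hstep : forall x, In x ls -> cover_bound r x <= 1 + A * rpow0 (x / r) a).
  { intros x Hx. pose proof (rpow0_nonneg (x / r) a). unfold cover_bound.
    destruct Rle_dec; [nra|]. unfold rpow0.
    destruct Rlt_dec as [_|Hx0]; [lra|].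
    exfalso. apply Hx0, Rdiv_lt_0_compat; lra. }
  eapply Rle_trans; [apply (sum_list_map_le _ _ _ Hstep)|].
  rewrite sum_list_map_affine, Rmult_1_r.
  assert (Hconc : sum_list (map (fun x => rpow0 x a) (map (fun x => x / r) ls))
                  <= M * Rpower (q * (L / r) / M) a).
  { apply sum_rpow0_le; [exact a_unit| |lra| | |].
    - apply Rmult_lt_0_compat; [lra|apply Rdiv_lt_0_compat; lra].
    - intros x Hx. apply in_map_iff in Hx. destruct Hx as (z & <- & Hz).
      apply Rmult_le_pos; [apply Hls, Hz|apply Rlt_le, Rinv_0_lt_compat; lra].
    - rewrite length_map. exact Hlen.
    - replace (sum_list (map (fun x => x / r) ls)) with (sum_list ls / r).
      + unfold Rdiv. rewrite <- Rmult_assoc.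
        apply Rmult_le_compat_r; [apply Rlt_le, Rinv_0_lt_compat|]; lra.
      + clear -Hr. induction ls as [|x ls IH]; cbn; [field; lra|]. rewrite <- IH. field. lra. }
  rewrite map_map in Hconc.
  replace (q * (L / r) / M) with (q / M * (L / r)) in Hconc by (field; lra).
  rewrite <- Rpower_mult_distr in Hconc by (try apply Rdiv_lt_0_compat; lra).
  assert (HX : 1 <= Rpower (L / r) a).
  { rewrite <- (Rpower_O (L / r)) by (apply Rdiv_lt_0_compat; lra).
    apply Rle_Rpower; [|lra]. apply (Rmult_le_reg_r r); [lra|]. field_simplify; lra. }
  assert (HA : A * (1 - theta) = M) by (unfold A; field; lra).
  assert (A * sum_list (map (fun x => rpow0 (x / r) a) ls) <= A * (theta * Rpower (L / r) a))
    by (apply Rmult_le_compat_l; [lra|]; unfold theta; rewrite Rmult_assoc; exact Hconc).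
  nra.
Qed.

Lemma run_lengths_le (L : R) (l : list (nat * nat)) : 0 < L ->
  (total_length l <= (k - 1) * n)%nat ->
  sum_list (map (fun p => INR (snd p - fst p) * (L / INR (k * n))) l) <= q * L.
Proof.
  intros HL Htot. rewrite sum_list_run_lengths.
  assert (0 < INR k) by (apply lt_0_INR; lia).
  assert (0 < INR n) by (apply lt_0_INR; lia).
  replace (q * L) with (INR ((k - 1) * n) * (L / INR (k * n))).
  - apply Rmult_le_compat_r; [|apply le_INR; exact Htot].
    apply Rlt_le, Rdiv_lt_0_compat; [lra|apply lt_0_INR; nia].
  - unfold q. rewrite !mult_INR, minus_INR by lia. cbn [INR]. field. lra.
Qed.

Lemma covering_number_iter (r : R) (T : nat) : 0 < r ->
  forall u L, 0 <= L -> L * q ^ T <= r ->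
  exists m, covered_by_balls (fun y => E y /\ u <= y <= u + L) r m /\
            INR m <= cover_bound r L.
Proof.
  intros Hr. pose proof q_bounds.
  induction T as [|T IH]; intros u L HL HLT.
  - cbn in HLT. exists 1%nat. split; [apply covered_by_balls_short; lra|].
    unfold cover_bound. destruct Rle_dec; cbn; lra.
  - destruct (Rle_dec L r) as [HLr|HLr].
    { exists 1%nat. split; [apply covered_by_balls_short; lra|].
      unfold cover_bound. destruct Rle_dec; cbn; lra. }
    destruct (avoid_interval_runs k n eps E u L ltac:(lia) n_pos n_eps avoid ltac:(lra))
      as (l & Hlen & Htot & Hle & Hcov).
    set (d := L / INR (k * n)) in *.
    assert (Hd : 0 < d) by (apply Rdiv_lt_0_compat; [lra|apply lt_0_INR; nia]).
    set (len := fun p : nat * nat => INR (snd p - fst p) * d).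
    assert (Hlen0 : forall x, In x (map len l) -> 0 <= x).
    { intros x Hx. apply in_map_iff in Hx. destruct Hx as (p & <- & _).
      apply Rmult_le_pos; [apply pos_INR|lra]. }
    assert (Hsum : sum_list (map len l) <= q * L) by (apply run_lengths_le; [lra|exact Htot]).
    destruct (covered_by_balls_Union
                (fun p y => E y /\ u + INR (fst p) * d <= y <= u + INR (fst p) * d + len p)
                (fun p => cover_bound r (len p)) l r) as (m & Hcovm & Hm).
    { intros p Hp. apply IH; [apply Hlen0, in_map, Hp|].
      assert (len p <= q * L)
        by (eapply Rle_trans; [apply In_le_sum_list, in_map|]; eauto).
      pose proof (pow_le q T ltac:(lra)). cbn in HLT. nra. }
    exists m. split.
    + eapply covered_by_balls_mono; [|apply Hcovm]. intros y [Ey Hy].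
      destruct (Hcov y Ey Hy) as (p & Hp & Hyp). exists p. split; [exact Hp|].
      split; [exact Ey|]. unfold len. rewrite minus_INR by (apply Hle, Hp). lra.
    + assert (Htarget : cover_bound r L = A * Rpower (L / r) a)
        by (unfold cover_bound; destruct Rle_dec; [lra|reflexivity]).
      rewrite Htarget. eapply Rle_trans; [exact Hm|]. rewrite <- map_map.
      apply cover_bound_pieces; [lra|exact Hlen0| |exact Hsum].
      rewrite length_map. apply le_INR. exact Hlen.
Qed.

Lemma covering_number_le (r u L : R) : 0 < r <= L ->
  exists m, covered_by_balls (fun y => E y /\ u <= y <= u + L) r m /\
            INR m <= A * Rpower (L / r) a.
Proof.
  intros [Hr HL]. pose proof q_bounds.
  destruct (pow_lt_1_zero q ltac:(rewrite Rabs_pos_eq; lra) (r / L)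
              ltac:(apply Rdiv_lt_0_compat; lra)) as [T HT].
  specialize (HT T (le_n T)). rewrite Rabs_pos_eq in HT by (apply pow_le; lra).
  destruct (covering_number_iter r T Hr u L ltac:(lra)) as (m & Hcov & Hm).
  { apply (Rmult_le_reg_r (/ L)); [apply Rinv_0_lt_compat; lra|].
    replace (L * q ^ T * / L) with (q ^ T) by (field; lra). fold (r / L). lra. }
  exists m. split; [exact Hcov|]. unfold cover_bound in Hm.
  destruct Rle_dec; [|exact Hm].
  replace L with r by lra. rewrite Rdiv_diag by lra.
  unfold Rpower. rewrite ln_1, Rmult_0_r, exp_0.
  pose proof A_ge1. lra.
Qed.

Lemma avoid_assouad_ok : assouad_ok E a.
Proof.
  exists (A * Rpower 2 a). split.
  { pose proof A_ge1. pose proof (Rpower_pos 2 a). nra. }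
  intros r Rr Hr HrR x Ex.
  destruct (covering_number_le r (x - Rr) (2 * Rr) ltac:(lra)) as (m & Hcov & Hm).
  exists m. split.
  - eapply covered_by_balls_mono; [|apply Hcov].
    intros y [Hy Ey]. apply Rabs_def2 in Hy. split; [exact Ey|lra].
  - replace (2 * Rr / r) with (2 * (Rr / r)) in Hm by (field; lra).
    rewrite <- Rpower_mult_distr, <- Rmult_assoc in Hm by (try apply Rdiv_lt_0_compat; lra).
    exact Hm.
Qed.

Lemma avoid_hausdorff_null (s : R) : a < s -> bounded_set E -> hausdorff_null s E.
Proof.
  intros Has [bound Hbound]. apply hausdorff_null_of_ball_covers; [lra|].
  intros delta eta Hdelta Heta.
  set (L := 2 * (Rabs bound + 1)).
  assert (HL : 0 < L) by (pose proof (Rabs_pos bound); unfold L; lra).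
  pose proof A_ge1.
  set (K := A * Rpower L a * Rpower 2 s).
  assert (HK : 0 < K)
    by (pose proof (Rpower_pos L a); pose proof (Rpower_pos 2 s); unfold K;
        apply Rmult_lt_0_compat; [apply Rmult_lt_0_compat|]; lra).
  set (rho := Rpower (eta / K) (/ (s - a))).
  set (r := Rmin rho (Rmin L (delta / 2))).
  assert (Hrho : 0 < rho) by apply Rpower_pos.
  assert (Hr : 0 < r) by (repeat apply Rmin_glb_lt; lra).
  assert (Hr_rho : r <= rho) by apply Rmin_l.
  assert (Hr_L : r <= L /\ r <= delta / 2).
  { unfold r. pose proof (Rmin_r rho (Rmin L (delta / 2))).
    pose proof (Rmin_l L (delta / 2)). pose proof (Rmin_r L (delta / 2)). lra. }
  destruct (covering_number_le r (- (Rabs bound + 1)) L ltac:(lra)) as (m & Hcov & Hm).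
  exists r, m. split; [exact Hr|]. split; [lra|]. split.
  - eapply covered_by_balls_mono; [|apply Hcov]. intros y Ey. split; [exact Ey|].
    pose proof (Hbound y Ey). pose proof (Rle_abs y). pose proof (Rle_abs (- y)).
    pose proof (Rle_abs bound). rewrite Rabs_Ropp in *. unfold L. lra.
  - assert (Hscale : A * Rpower (L / r) a * Rpower (2 * r) s = K * Rpower r (s - a)).
    { unfold K, Rdiv. rewrite <- Rpower_mult_distr by (try apply Rinv_0_lt_compat; lra).
      rewrite <- Rpower_mult_distr by lra.
      replace (Rpower (/ r) a) with (Rpower r (- a)).
      2:{ rewrite Rpower_Ropp. unfold Rpower. rewrite ln_Rinv by lra.
          rewrite <- exp_Ropp. f_equal. ring. }
      replace (s - a) with (s + - a) by ring. rewrite Rpower_plus. ring. }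
    assert (Hsmall : K * Rpower r (s - a) <= eta).
    { apply Rle_trans with (K * Rpower rho (s - a)).
      - apply Rmult_le_compat_l; [lra|]. apply Rle_Rpower_l; lra.
      - unfold rho. rewrite Rpower_mult, Rinv_l, Rpower_1 by
          (try apply Rdiv_lt_0_compat; lra).
        right. field. lra. }
    assert (INR m * Rpower (2 * r) s <= A * Rpower (L / r) a * Rpower (2 * r) s)
      by (apply Rmult_le_compat_r; [apply Rlt_le, Rpower_pos|exact Hm]).
    lra.
Qed.
End Counting.

Lemma Rceil_spec (x : R) : 0 < x -> exists n : nat, INR n = Rceil x /\ x <= INR n < x + 1.
Proof.
  intros Hx. destruct (archimed (- x)) as [Hup1 Hup2].
  assert (Hz : IZR (1 - up (- x)) = 1 - IZR (up (- x))) by (rewrite minus_IZR; reflexivity).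
  assert (Hz0 : (0 <= 1 - up (- x))%Z) by (apply le_IZR; lra).
  exists (Z.to_nat (1 - up (- x))).
  rewrite INR_IZR_INZ, Z2Nat.id by exact Hz0. unfold Rceil. split; [reflexivity|lra].
Qed.

Lemma Rle_of_le_between (t s : R) : s < 1 -> (forall s', s < s' < 1 -> t <= s') -> t <= s.
Proof.
  intros Hs Hle. destruct (Rle_dec t s) as [|Hts]; [assumption|exfalso].
  assert (Rmin t 1 <= t /\ Rmin t 1 <= 1) by (split; [apply Rmin_l|apply Rmin_r]).
  assert (s < Rmin t 1) by (apply Rmin_glb_lt; lra).
  specialize (Hle ((s + Rmin t 1) / 2) ltac:(lra)). lra.
Qed.

Lemma scale_factor_lt_1 (M q a : R) : 0 < M -> 0 < q -> ln M < a * (ln M - ln q) ->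
  M * Rpower (q / M) a < 1.
Proof.
  intros HM Hq Ha. unfold Rpower. rewrite <- (exp_ln M) at 1 by exact HM.
  rewrite <- exp_plus, <- exp_0. apply exp_increasing.
  unfold Rdiv. rewrite ln_mult, ln_Rinv by (try apply Rinv_0_lt_compat; assumption). lra.
Qed.

Lemma ap_bound_threshold (k : nat) (eps : R) : (2 <= k)%nat -> 0 < eps < 1 ->
  exists n : nat, (1 <= n)%nat /\ 1 <= INR n * eps /\
    0 < ap_bound k eps < 1 /\
    forall a, ap_bound k eps < a -> INR (S n) * Rpower ((1 - / INR k) / INR (S n)) a < 1.
Proof.
  intros Hk Heps.
  assert (Hx : 1 < / eps) by (rewrite <- Rinv_1; apply Rinv_lt_contravar; lra).
  destruct (Rceil_spec (/ eps) ltac:(lra)) as (n & Hceil & Hn).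
  assert (Hn1 : (1 <= n)%nat) by (apply INR_le; cbn [INR]; lra).
  assert (Hneps : 1 <= INR n * eps).
  { replace 1 with (/ eps * eps) by (field; lra). apply Rmult_le_compat_r; lra. }
  exists n. split; [exact Hn1|]. split; [exact Hneps|].
  assert (HkR : 2 <= INR k) by (replace 2 with (INR 2) by (cbn; lra); apply le_INR, Hk).
  assert (Hq : 0 < 1 - / INR k < 1).
  { assert (0 < / INR k <= / 2)
      by (split; [apply Rinv_0_lt_compat|apply Rinv_le_contravar]; lra). lra. }
  assert (HlnM : 0 < ln (INR (S n)))
    by (rewrite <- ln_1; apply ln_increasing; [lra|rewrite S_INR; lra]).
  assert (Hlnq : ln (1 - / INR k) < 0) by (rewrite <- ln_1; apply ln_increasing; lra).
  assert (Hbound : ap_bound k eps = ln (INR (S n)) / (ln (INR (S n)) - ln (1 - / INR k)))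
    by (unfold ap_bound; rewrite S_INR, Hceil; reflexivity).
  assert (Hscaled : ap_bound k eps * (ln (INR (S n)) - ln (1 - / INR k)) = ln (INR (S n)))
    by (rewrite Hbound; field; lra).
  assert (0 < ap_bound k eps) by (rewrite Hbound; apply Rdiv_lt_0_compat; lra).
  split; [split; [assumption|nra]|].
  intros a Ha. apply scale_factor_lt_1; [rewrite S_INR; lra|lra|nra].
Qed.

Lemma avoid_hausdorff_dim_le (k : nat) (eps t : R) (E : R -> Prop) :
  (2 <= k)%nat -> 0 < eps < 1 -> bounded_set E -> eps_avoids_kAP k eps E ->
  hausdorff_dim E t -> t <= ap_bound k eps.
Proof.
  intros Hk Heps Hbd Havoid [Hlow _].
  destruct (ap_bound_threshold k eps Hk Heps) as (n & Hn & Hneps & Hbound & Htheta).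
  apply Rle_of_le_between; [apply Hbound|]. intros s Hs.
  set (a := (ap_bound k eps + s) / 2).
  apply Hlow. split; [lra|].
  apply (avoid_hausdorff_null k n eps E a Hk Hn Hneps Havoid);
    [unfold a; lra|apply Htheta; unfold a; lra|unfold a; lra|exact Hbd].
Qed.

Lemma avoid_assouad_dim_le (k : nat) (eps t : R) (E : R -> Prop) :
  (2 <= k)%nat -> 0 < eps < 1 -> eps_avoids_kAP k eps E ->
  assouad_dim E t -> t <= ap_bound k eps.
Proof.
  intros Hk Heps Havoid [Hlow _].
  destruct (ap_bound_threshold k eps Hk Heps) as (n & Hn & Hneps & Hbound & Htheta).
  apply Rle_of_le_between; [apply Hbound|]. intros s Hs.
  apply Hlow. split; [lra|].
  apply (avoid_assouad_ok k n eps E s Hk Hn Hneps Havoid); [lra|apply Htheta; lra].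
Qed.

Lemma ln_le (x y : R) : 0 < x -> x <= y -> ln x <= ln y.
Proof. intros Hx [Hxy|<-]; [left; apply ln_increasing; assumption|right; reflexivity]. Qed.

Lemma ap_bound_le (k : nat) (eps : R) : (2 <= k)%nat -> 0 < eps < / 10 ->
  ap_bound k eps <= 1 - / 3 / (INR k * Rabs (ln eps)).
Proof.
  intros Hk Heps. set (x := / eps).
  assert (Hx : 10 < x)
    by (unfold x; rewrite <- (Rinv_inv 10); apply Rinv_lt_contravar; nra).
  destruct (Rceil_spec x ltac:(lra)) as (n & Hceil & Hn).
  set (M := Rceil x + 1). set (q := 1 - / INR k).
  assert (HkR : 2 <= INR k) by (replace 2 with (INR 2) by (cbn; lra); apply le_INR, Hk).
  assert (Hinvk : 0 < / INR k <= / 2)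
    by (split; [apply Rinv_0_lt_compat|apply Rinv_le_contravar]; lra).
  assert (Hq : 1 / 2 <= q < 1) by (unfold q; lra).
  assert (Hlnx : Rabs (ln eps) = ln x).
  { unfold x. rewrite ln_Rinv by lra. rewrite Rabs_left; [lra|].
    rewrite <- ln_1. apply ln_increasing; lra. }
  assert (Hlx : 0 < ln x) by (rewrite <- ln_1; apply ln_increasing; lra).
  assert (HlnM : 0 < ln M) by (rewrite <- ln_1; apply ln_increasing; unfold M; lra).
  assert (HlnM_le : ln M <= 2 * ln x).
  { replace (2 * ln x) with (ln (x * x)) by (rewrite ln_mult by lra; ring).
    apply ln_le; [unfold M; lra|]. unfold M. nra. }
  assert (Hlnq_ge : - ln x <= ln q).
  { rewrite <- ln_Rinv by lra. apply ln_le; [apply Rinv_0_lt_compat; lra|].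
    apply Rle_trans with (/ 2); [apply Rinv_le_contravar|]; lra. }
  assert (Hlnq_le : ln q <= - / INR k).
  { pose proof (exp_ineq1_le (ln q)) as H. rewrite exp_ln in H by lra. unfold q in *. lra. }
  set (D := ln M - ln q).
  assert (HD : 0 < D <= 3 * ln x) by (unfold D; split; lra).
  assert (Hgap : 1 - ap_bound k eps = - ln q / D)
    by (unfold ap_bound, D, M, q, x; field; unfold D, M, q, x in HD; lra).
  rewrite Hlnx.
  assert (/ 3 / (INR k * ln x) <= - ln q / D); [|lra].
  assert (Hk_lnq : 1 <= - ln q * INR k)
    by (assert (/ INR k * INR k = 1) by (field; lra); nra).
  apply (Rmult_le_reg_r (INR k * ln x * D)); [apply Rmult_lt_0_compat; nra|].
  replace (/ 3 / (INR k * ln x) * (INR k * ln x * D)) with (D / 3) by (field; nra).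
  replace (- ln q / D * (INR k * ln x * D)) with (- ln q * INR k * ln x) by (field; lra).
  nra.
Qed.

Theorem theorem1p1 :
  exists c : R, 0 < c /\
    forall (k : nat) (eps : R), (3 <= k)%nat -> 0 < eps -> eps < / 10 ->
      (forall d, d_ke k eps d -> d <= ap_bound k eps) /\
      ap_bound k eps <= 1 - c / (INR k * Rabs (ln eps)) /\
      (forall E : R -> Prop, bounded_set E -> eps_avoids_kAP k eps E ->
         forall a, assouad_dim E a -> a <= ap_bound k eps).
Proof.
  exists (/ 3). split; [lra|].
  intros k eps Hk Heps Heps10.
  assert (Hk2 : (2 <= k)%nat) by lia.
  split; [|split].
  - intros d [_ Hleast]. apply Hleast. intros t (E & Hbd & Havoid & Hdim).
    exact (avoid_hausdorff_dim_le k eps t E Hk2 ltac:(lra) Hbd Havoid Hdim).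
  - apply ap_bound_le; [exact Hk2|lra].
  - intros E _ Havoid a Hdim.
    exact (avoid_assouad_dim_le k eps a E Hk2 ltac:(lra) Havoid Hdim).
Qed.
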